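(* Let $u,v$ be generalized Stirling permutations and $F_u^*,F_v^*$ the corresponding dual basis elements of the graded dual $\mathrm{STSym}^*$ (whose product is the transpose of the coproduct of $\mathrm{STSym}$). Then $$F_u^*\cdot F_v^*=\sum_{w:\ u\backslash v\ \le_{Pw}\ w\ \le_{Pw}\ u/v}F_w^*.$$
   Context: A generalized Stirling permutation (GSP) of degree $n$ is a planar tree (children of each node linearly ordered, each node a leaf or with $\ge2$ children) with $n+1$ leaves, together with a bijection $\kappa$ from its internal nodes to $\{1,\dots,N\}$ ($N$ = number of internal nodes) increasing from each internal node to its internal children. Its word $\mathbf w(u)=u_1\cdots u_n$: a leaf has empty word; a node $x$ with children $c_1,\dots,c_k$ has word $\mathbf w(c_1)\kappa(x)\mathbf w(c_2)\cdots\kappa(x)\mathbf w(c_k)$; $u\mapsto \mathbf w(u)$ is injective and we identify $u$ with its word, a packed word (set of letters $\{1,\dots,N\}$). For a word $a$, $\mathrm{pack}(a)$ is the packed word with the same relative order of letters. $\mathrm{STSym}$ has basis $\{F_u\}$ over GSPs, with coproduct $\Delta(F_w)=\sum F_{\mathrm{pack}(w_1\cdots w_i)}\otimes F_{\mathrm{pack}(w_{i+1}\cdots w_n)}$ over all $0\le i\le n$ with $\{w_1,\dots,w_i\}\cap\{w_{i+1},\dots,w_n\}=\emptyset$ (equivalently, over allowable lightning splittings of the tree, with standardized labels). $u/v$ is the GSP whose word is $u$ with all letters increased by $\max v$, followed by $v$ (tree: root of $u$ identified with the leftmost leaf of $v$); $u\backslash v$ is the GSP with word $u$ followed by $v$ with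 all letters increased by $\max u$ (tree: root of $v$ identified with the rightmost leaf of $u$). Planar weak order: for packed words, $w^{-1}(a)=\{p:w_p=a\}$, $\mathrm{iInv}(w)=\{(a,b):a<b,\ \min w^{-1}(a)>\max w^{-1}(b)\}$, $T_a(w)$ = $w$ with letters $a,a+1$ swapped; $\le_{Pw}$ is the reflexive–transitive closure of: $u$ is covered by $w$ iff $u=T_a(w)$ and $|\mathrm{iInv}(w)|=|\mathrm{iInv}(u)|+1$; on GSPs it is induced via words. *)

From Stdlib Require Import Relations.
From mathcomp Require Import all_boot.
Set Implicit Arguments. Unset Strict Implicit. Unset Printing Implicit Defensive.

(** Words are sequences of natural numbers; letters of packed words are 1..N. *)

Inductive ptree := Leaf | Node of nat & seq ptree.

Fixpoint tree_wf (t : ptree) : bool :=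
  match t with
  | Leaf => true
  | Node x cs =>
      [&& 1 < size cs,
          all (fun c => match c with Leaf => true | Node y _ => x < y end) cs
        & all tree_wf cs]
  end.

Fixpoint tree_labels (t : ptree) : seq nat :=
  match t with
  | Leaf => [::]
  | Node x cs => x :: flatten (map tree_labels cs)
  end.

Definition tree_labelling_ok (t : ptree) : bool :=
  perm_eq (tree_labels t) (iota 1 (size (tree_labels t))).

Fixpoint tree_word (t : ptree) : seq nat :=
  match t with
  | Leaf => [::]
  | Node x cs =>
      match cs with
      | [::] => [::]
      | c :: cs' => tree_word c ++ flatten (map (fun c' => x :: tree_word c') cs')
      end
  end.

(** A generalized Stirling permutation, identified with its word. *)
Definition isGSP (w : seq nat) : Prop :=
  exists t : ptree, [&& tree_wf t, tree_labelling_ok t & tree_word t == w].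

(** Largest letter (0 for the empty word). *)
Definition maxw (w : seq nat) : nat := foldr maxn 0 w.

Definition pack (a : seq nat) : seq nat :=
  map (fun x => count (fun y => y <= x) (undup a)) a.

Definition gsp_over (u v : seq nat) : seq nat := map (fun x => x + maxw v) u ++ v.
Definition gsp_under (u v : seq nat) : seq nat := u ++ map (fun x => x + maxw u) v.

Definition packed (w : seq nat) : bool :=
  all (fun x => 0 < x) w && all (fun k => k \in w) (iota 1 (maxw w)).

(** 0-based positions of the first and last occurrences of a letter. *)
Definition first_pos (a : nat) (w : seq nat) : nat := index a w.
Definition last_pos (a : nat) (w : seq nat) : nat := size w - (index a (rev w)).+1.

Definition iInv_card (w : seq nat) : nat :=
  \sum_(1 <= a < (maxw w).+1) \sum_(a.+1 <= b < (maxw w).+1)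
     (last_pos b w < first_pos a w).

Definition swap_letters (a : nat) (w : seq nat) : seq nat :=
  map (fun x => if x == a then a.+1 else if x == a.+1 then a else x) w.

Definition pw_cover (u w : seq nat) : Prop :=
  [/\ packed u, packed w &
      exists a : nat, u = swap_letters a w /\ iInv_card w = (iInv_card u).+1].

Definition pw_le : seq nat -> seq nat -> Prop := clos_refl_trans (seq nat) pw_cover.

Definition split_ok (w : seq nat) (i : nat) : bool :=
  ~~ has (fun x => x \in drop i w) (take i w).

(** Elements of the graded dual STSym^* as coefficient functions on the basis
    (GSP words); the dual basis element F_u^*. *)
Definition Fdual (u : seq nat) : seq nat -> nat := fun w => (w == u : nat).

(** Product of STSym^*: transpose of the coproduct
    Delta(F_w) = sum_{allowed i} F_{pack(w_1..w_i)} (x) F_{pack(w_{i+1}..w_n)}.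
    The coefficient of F_w^* in f.g is sum over allowed splittings of w. *)
Definition dual_prod (f g : seq nat -> nat) (w : seq nat) : nat :=
  \sum_(i < (size w).+1)
     (if split_ok w i then f (pack (take i w)) * g (pack (drop i w)) else 0).

From Stdlib Require Import Relations.
From mathcomp Require Import all_boot zify.
Set Implicit Arguments. Unset Strict Implicit. Unset Printing Implicit Defensive.

(* The coefficient of F_w^* in F_u^* . F_v^* counts the allowable cuts of w
   whose two sides pack to u and v.  Packing preserves lengths, so only the
   cut after |u| letters can contribute, and the coefficient is 1 or 0
   according to whether w "splits into" u and v (dual_prod_FdualE).  For
   packed words we then show that w splits into u and v iff u\v <= w <= u/v:
   - A cover of the planar weak order transposes two letters a, a+1; by a
     counting identity for iInv (iInv_card_swap) it never destroys an
     inversion (inv_incl_pw_le).  So on each side of the cut, an element w of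
     the interval is squeezed between two words with the relative order of u
     (resp. v), hence packs to u (resp. v), and no letter of w crosses the cut
     (interval_splits_into).
   - Conversely, if w splits, transposing a right-hand a with a left-hand a+1
     walks down covers to u\v, and transposing a left-hand a with a right-hand
     a+1 walks up covers to u/v (split_above_under, split_below_over).
   Generalized Stirling permutations are packed words (gsp_packed), which
   gives the theorem. *)

Lemma leq_maxw s z : z \in s -> z <= maxw s.
Proof. by elim: s => //= x s IH; rewrite in_cons => /orP [/eqP ->|/IH]; lia. Qed.

Lemma maxw_in s : s != [::] -> maxw s \in s.
Proof.
elim: s => // x [|y s] IH _; first by rewrite /= maxn0 mem_seq1.
rewrite in_cons [maxw _]/= /maxn; case: ltnP => _; last by rewrite eqxx.
by rewrite IH ?orbT.
Qed.

Lemma eq_maxw s t : s =i t -> maxw s = maxw t.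
Proof.
have le s1 s2 : {subset s1 <= s2} -> maxw s1 <= maxw s2.
  by case: s1 => [//|x s1] sub; apply/leq_maxw/sub/maxw_in.
by move=> E; apply/eqP; rewrite eqn_leq !le // => z; rewrite E.
Qed.

Lemma packedP s : packed s <-> forall z, (z \in s) = (0 < z <= maxw s).
Proof.
split => [/andP [/allP pos /allP all_in] z | H].
  apply/idP/idP => [zs | z_rng]; first by rewrite pos // leq_maxw.
  by apply: all_in; rewrite mem_iota; lia.
by apply/andP; split; apply/allP => z; rewrite ?H ?mem_iota; lia.
Qed.

Lemma packed_of_range s m : (forall z, (z \in s) = (0 < z <= m)) -> packed s.
Proof.
move=> H; suff Em : maxw s = m by apply/packedP => z; rewrite Em.
have [m0 | m_gt0] := posnP m.
  by rewrite m0 in H *; case: s H => [//|x s] /(_ x); rewrite mem_head => /esym/andP; lia.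
have ms : m \in s by rewrite H; lia.
have s_nil : s != [::] by case: (s) ms.
have := leq_maxw ms; have := maxw_in s_nil; rewrite H; lia.
Qed.

Lemma packed_eq_mem s t : packed s -> s =i t -> packed t.
Proof.
by move=> /packedP ps E; apply: (@packed_of_range _ (maxw s)) => z; rewrite -E ps.
Qed.

Lemma packed_gt0 s z : packed s -> z \in s -> 0 < z.
Proof. by move=> /packedP ps; rewrite ps => /andP []. Qed.

Section Transposition.
Variable a : nat.

Definition transp (z : nat) : nat :=
  if z == a then a.+1 else if z == a.+1 then a else z.

Lemma swap_lettersE s : swap_letters a s = map transp s.
Proof. by []. Qed.

Lemma transpK : involutive transp.
Proof. by move=> z; rewrite /transp; repeat case: eqP; lia. Qed.

Lemma transp_inj : injective transp.
Proof. exact: can_inj transpK. Qed.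

Lemma transp_a : transp a = a.+1.
Proof. by rewrite /transp eqxx. Qed.

Lemma transp_a1 : transp a.+1 = a.
Proof. by rewrite /transp; case: eqP => [|_]; [lia | rewrite eqxx]. Qed.

Lemma swap_lettersK : involutive (swap_letters a).
Proof. by move=> s; rewrite !swap_lettersE -map_comp (eq_map transpK) map_id. Qed.

Lemma mem_swap_letters s z : (z \in swap_letters a s) = (transp z \in s).
Proof. by rewrite swap_lettersE -{1}(transpK z) mem_map //; apply: transp_inj. Qed.

Lemma first_pos_swap s c : first_pos c (swap_letters a s) = first_pos (transp c) s.
Proof. by rewrite /first_pos swap_lettersE -{1}(transpK c) index_map //; apply: transp_inj. Qed.

Lemma last_pos_swap s c : last_pos c (swap_letters a s) = last_pos (transp c) s.
Proof.
rewrite /last_pos swap_lettersE size_map -map_rev -{1}(transpK c) index_map //.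
exact: transp_inj.
Qed.

Lemma transp_ltn c d : (transp c < transp d) + ((c == a) && (d == a.+1))
  = (c < d) + ((c == a.+1) && (d == a)).
Proof. by rewrite /transp; repeat case: eqP; lia. Qed.

Lemma transp_leq c d : ~~ ((c == a) && (d == a.+1)) -> ~~ ((c == a.+1) && (d == a)) ->
  (transp c <= transp d) = (c <= d).
Proof. by rewrite /transp; repeat case: eqP; lia. Qed.

Hypothesis a_gt0 : 0 < a.

Lemma transp_range m z : a < m -> (0 < transp z <= m) = (0 < z <= m).
Proof. by move=> a_lt; rewrite /transp; repeat case: eqP; lia. Qed.

Lemma perm_transp_iota m : a < m ->
  perm_eq (map transp (index_iota 1 m.+1)) (index_iota 1 m.+1).
Proof.
move=> a_lt; apply: uniq_perm => [||z]; rewrite ?(map_inj_uniq transp_inj) ?iota_uniq //.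
rewrite -{1}(transpK z) mem_map; last exact: transp_inj.
by rewrite !mem_index_iota; move: (transp_range z a_lt); lia.
Qed.

Lemma mem_swap_packed s : packed s -> a < maxw s -> swap_letters a s =i s.
Proof. by move=> /packedP ps a_lt z; rewrite mem_swap_letters !ps transp_range. Qed.

End Transposition.

(** [follows x c d]: every occurrence of c in x comes after every occurrence
    of d; iInv(x) counts the pairs c < d with [follows x c d]. *)
Definition follows (x : seq nat) (c d : nat) : nat := last_pos d x < first_pos c x.

Lemma follows_swap a x c d :
  follows (swap_letters a x) c d = follows x (transp a c) (transp a d).
Proof. by rewrite /follows first_pos_swap last_pos_swap. Qed.

Lemma iInv_cardE x : iInv_card x =
  \sum_(1 <= c < (maxw x).+1) \sum_(1 <= d < (maxw x).+1) (c < d) * follows x c d.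
Proof.
apply: eq_big_nat => c /andP [c_gt0 c_le].
rewrite [RHS](@big_cat_nat _ _ _ c.+1) //=; try lia.
rewrite [X in X + _]big1_seq ?add0n => [|d]; last first.
  by rewrite mem_index_iota => /andP [_ /andP [_ d_le]]; rewrite ltnNge -ltnS d_le.
by apply: eq_big_nat => d /andP [c_lt _]; rewrite c_lt mul1n.
Qed.

Lemma sum_pick2 (r : seq nat) (f : nat -> nat -> nat) b1 b2 :
  uniq r -> b1 \in r -> b2 \in r ->
  \sum_(c <- r) \sum_(d <- r) ((c == b1) && (d == b2)) * f c d = f b1 b2.
Proof.
move=> r_uniq b1r b2r.
rewrite (bigD1_seq b1) //= [X in _ + X]big1_seq ?addn0 => [|c /andP [c_b1 _]].
  rewrite (bigD1_seq b2) //= !eqxx mul1n big1_seq ?addn0 // => d /andP [d_b2 _].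
  by rewrite (negbTE d_b2).
by rewrite big1_seq // => d _; rewrite (negbTE c_b1).
Qed.

(** Key counting identity: transposing a and a+1 changes iInv only through
    the relative position of the blocks of a and of a+1. *)
Lemma iInv_card_swap x a : packed x -> 0 < a -> a < maxw x ->
  iInv_card (swap_letters a x) + follows x a a.+1 = iInv_card x + follows x a.+1 a.
Proof.
move=> px a_gt0 a_lt.
rewrite !iInv_cardE.
have -> : maxw (swap_letters a x) = maxw x by apply/eq_maxw/mem_swap_packed.
set r := index_iota 1 (maxw x).+1.
have r_uniq : uniq r by apply: iota_uniq.
have r_a : a \in r by rewrite mem_index_iota; lia.
have r_a1 : a.+1 \in r by rewrite mem_index_iota; lia.
have -> : \sum_(c <- r) \sum_(d <- r) (c < d) * follows (swap_letters a x) c d =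
          \sum_(c <- r) \sum_(d <- r) (transp a c < transp a d) * follows x c d.
  have rP := perm_transp_iota a_gt0 a_lt.
  rewrite -(perm_big _ rP) big_map; apply: eq_bigr => c _.
  rewrite -(perm_big _ rP) big_map; apply: eq_bigr => d _.
  by rewrite follows_swap !transpK.
rewrite -(sum_pick2 (follows x) r_uniq r_a r_a1) -(sum_pick2 (follows x) r_uniq r_a1 r_a).
rewrite -!big_split; apply: eq_bigr => c _; rewrite -!big_split; apply: eq_bigr => d _ /=.
by rewrite -!mulnDl transp_ltn.
Qed.

Lemma first_pos_le s i : i < size s -> first_pos (nth 0 s i) s <= i.
Proof. by move=> i_lt; rewrite leqNgt; apply/negP => /(before_find 0) /=; rewrite eqxx. Qed.

Lemma last_pos_ge s j : j < size s -> j <= last_pos (nth 0 s j) s.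
Proof.
move=> j_lt; have := @first_pos_le (rev s) (size s - j.+1).
rewrite size_rev nth_rev; last by lia.
have -> : size s - (size s - j.+1).+1 = j by lia.
by rewrite /first_pos /last_pos; lia.
Qed.

Lemma follows_occ y i j : i < j < size y -> follows y (nth 0 y i) (nth 0 y j) = 0.
Proof.
move=> /andP [ij j_lt]; have first_le := first_pos_le (ltn_trans ij j_lt).
by rewrite /follows ltnNge (leq_trans first_le (leq_trans (ltnW ij) (last_pos_ge j_lt))).
Qed.

Lemma first_pos_cat_in c (s1 s2 : seq nat) : c \in s1 -> first_pos c (s1 ++ s2) < size s1.
Proof. by move=> cs1; rewrite /first_pos index_cat cs1 index_mem. Qed.

Lemma first_pos_cat_out c (s1 s2 : seq nat) : c \notin s1 -> size s1 <= first_pos c (s1 ++ s2).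
Proof. by move=> /negbTE cs1; rewrite /first_pos index_cat cs1 leq_addr. Qed.

Lemma last_pos_cat_in c (s1 s2 : seq nat) : c \in s1 -> c \notin s2 ->
  last_pos c (s1 ++ s2) < size s1.
Proof.
move=> cs1 /negbTE cs2; rewrite /last_pos rev_cat index_cat mem_rev cs2 size_cat size_rev.
have : index c (rev s1) < size s1 by rewrite -size_rev index_mem mem_rev.
by move: (index _ _) (size s2) => k n2; lia.
Qed.

Lemma last_pos_cat_out c (s1 s2 : seq nat) : c \in s2 -> size s1 <= last_pos c (s1 ++ s2).
Proof.
move=> cs2; rewrite /last_pos rev_cat index_cat mem_rev cs2 size_cat.
have : index c (rev s2) < size s2 by rewrite -size_rev index_mem mem_rev.
by move: (index _ _) (size s2) => k n2; lia.
Qed.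

(** A cover y <. x, with x = T_a y, never has an a+1 of y before an a of y:
    otherwise transposing would not increase iInv. *)
Lemma cover_no_swap_pair y x : pw_cover y x ->
  exists a, x = swap_letters a y /\
    forall i j, i < j < size y -> ~~ ((nth 0 y i == a.+1) && (nth 0 y j == a)).
Proof.
case=> py _ [a [ey ei]].
have ex : x = swap_letters a y by rewrite ey swap_lettersK.
exists a; split => //.
move=> i j /andP [ij j_lt]; apply/negP => /andP [/eqP yi /eqP yj].
have ay : a \in y by rewrite -yj mem_nth.
have a1y : a.+1 \in y by rewrite -yi mem_nth ?(ltn_trans ij).
have := iInv_card_swap py (packed_gt0 py ay) (leq_maxw a1y).
have -> : follows y a.+1 a = 0 by rewrite -yi -yj follows_occ // ij.
by rewrite -ex ei; lia.
Qed.

Definition inv_incl (x y : seq nat) : Prop := size x = size y /\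
  forall i j, i < j < size x ->
    (nth 0 x i == nth 0 x j) = (nth 0 y i == nth 0 y j) /\
    (nth 0 x j < nth 0 x i -> nth 0 y j < nth 0 y i).

Lemma inv_incl_refl x : inv_incl x x.
Proof. by []. Qed.

Lemma inv_incl_trans x y z : inv_incl x y -> inv_incl y z -> inv_incl x z.
Proof.
move=> [sxy Hxy] [syz Hyz]; split; first by rewrite sxy.
move=> i j ij; have [exy ixy] := Hxy i j ij.
have ij_y : i < j < size y by rewrite -sxy.
have [eyz iyz] := Hyz i j ij_y.
by rewrite exy eyz; split => // /ixy /iyz.
Qed.

(** Going up a cover only creates inversions: the transposed letters a, a+1
    never form an inversion of the lower word. *)
Lemma inv_incl_cover y x : pw_cover y x -> inv_incl y x.
Proof.
case/cover_no_swap_pair=> a [-> no_pair]; split; first by rewrite size_map.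
move=> i j ij; have i_lt : i < size y by lia.
rewrite !(nth_map 0) ?(inj_eq (@transp_inj a)); try lia; split => // inv.
have := transp_ltn a (nth 0 y j) (nth 0 y i); rewrite inv andbC (negbTE (no_pair _ _ ij)).
by case: (_ < _).
Qed.

Lemma inv_incl_pw_le x y : pw_le x y -> inv_incl x y.
Proof.
elim=> [? ? /inv_incl_cover // | ? | ? ? ? _ Hxy _ Hyz]; first exact: inv_incl_refl.
exact: inv_incl_trans Hxy Hyz.
Qed.

Lemma inv_incl_take k x y : inv_incl x y -> inv_incl (take k x) (take k y).
Proof.
move=> [sxy Hxy]; split; first by rewrite !size_take sxy.
move=> i j; rewrite size_take_min => ij.
have ik : i < k by lia.
have jk : j < k by lia.
by rewrite !(nth_take _ ik) !(nth_take _ jk); apply: Hxy; lia.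
Qed.

Lemma inv_incl_drop k x y : inv_incl x y -> inv_incl (drop k x) (drop k y).
Proof.
move=> [sxy Hxy]; split; first by rewrite !size_drop sxy.
by move=> i j; rewrite size_drop => ij; rewrite !nth_drop; apply: Hxy; lia.
Qed.

Definition same_order (s t : seq nat) : Prop := size s = size t /\
  forall i j, i < size s -> j < size s ->
    (nth 0 s i <= nth 0 s j) = (nth 0 t i <= nth 0 t j).

Lemma same_order_sym s t : same_order s t -> same_order t s.
Proof. by move=> [st H]; split => // i j; rewrite -st => i_lt j_lt; rewrite H. Qed.

Lemma same_order_eq s t i j : same_order s t -> i < size s -> j < size s ->
  (nth 0 s i == nth 0 s j) = (nth 0 t i == nth 0 t j).
Proof. by move=> [_ H] i_lt j_lt; rewrite !eqn_leq !H. Qed.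

Lemma same_order_shift s d : same_order s (map (fun x => x + d) s).
Proof.
split; first by rewrite size_map.
by move=> i j i_lt j_lt; rewrite !(nth_map 0) // leq_add2r.
Qed.

Lemma same_order_swap a s : (a \notin s) || (a.+1 \notin s) ->
  same_order s (swap_letters a s).
Proof.
move=> not_both; split; first by rewrite size_map.
move=> i j i_lt j_lt; rewrite !(nth_map 0) //.
have si := mem_nth 0 i_lt; have sj := mem_nth 0 j_lt.
have both : ~ (a \in s /\ a.+1 \in s) by case/orP: not_both => /negP nb [? ?].
rewrite transp_leq //; apply/negP => /andP [/eqP ei /eqP ej]; apply: both.
  by split; [rewrite -ei | rewrite -ej].
by split; [rewrite -ej | rewrite -ei].
Qed.

Lemma same_order_squeeze x y z :
  inv_incl x y -> inv_incl y z -> same_order x z -> same_order y x.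
Proof.
move=> [sxy Hxy] [syz Hyz] [sxz Hxz]; split => //.
have key i j : i < j < size x -> (nth 0 y i == nth 0 y j) = (nth 0 x i == nth 0 x j)
    /\ (nth 0 y j < nth 0 y i) = (nth 0 x j < nth 0 x i).
  move=> ij; have [i_lt j_lt] : i < size x /\ j < size x by lia.
  have [exy ixy] := Hxy i j ij.
  have ij_y : i < j < size y by rewrite -sxy.
  have [_ iyz] := Hyz i j ij_y.
  split => //; apply/idP/idP => [/iyz | /ixy //].
  by rewrite ltnNge -Hxz // -ltnNge.
move=> i j; rewrite -sxy => i_lt j_lt.
case: (ltngtP i j) => [ij | ji | ->]; last by rewrite !leqnn.
- have ij_x : i < j < size x by rewrite ij.
  have [_ l] := key i j ij_x.
  by rewrite [LHS]leqNgt [RHS]leqNgt l.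
- have ji_x : j < i < size x by rewrite ji.
  have [e l] := key j i ji_x.
  by rewrite [LHS]leq_eqVlt [RHS]leq_eqVlt l (eq_sym (nth 0 y i)) e eq_sym.
Qed.

(** Counting letters of [undup s] position by position: each distinct letter
    is counted at its last occurrence. *)
Lemma count_undup_nth (P : pred nat) (s : seq nat) :
  count P (undup s) = \sum_(j < size s) (P (nth 0 s j) && (nth 0 s j \notin drop j.+1 s)).
Proof.
elim: s => [|x s IH]; first by rewrite big_ord0.
rewrite big_ord_recl /= -IH drop0.
by case: (x \in s) => /=; rewrite ?add0n //; case: (P x).
Qed.

Lemma mem_drop_nth (s : seq nat) k x :
  (x \in drop k s) = has (fun l => nth 0 s l == x) (iota k (size s - k)).
Proof.
have -> : drop k s = map (nth 0 s) (iota k (size s - k)).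
  by rewrite map_nth_iota // take_oversize // size_drop.
by rewrite -has_pred1 has_map.
Qed.

Lemma pack_same_order s t : same_order s t -> pack s = pack t.
Proof.
move=> st; have [sz H] := st.
apply: (@eq_from_nth _ 0); first by rewrite !size_map sz.
move=> i; rewrite size_map => i_lt.
rewrite /pack !(nth_map 0) -?sz // !count_undup_nth -sz.
apply: eq_bigr => j _; have j_lt := ltn_ord j.
rewrite H //; congr (_ && ~~ _).
rewrite !mem_drop_nth -sz; apply: eq_in_has => l; rewrite mem_iota => l_rng.
by apply: same_order_eq => //; lia.
Qed.

(** Packing a packed word leaves it unchanged: the rank of c in {1, ..., m} is c. *)
Lemma count_undup_packed s c : packed s -> c \in s ->
  count (fun y => y <= c) (undup s) = c.
Proof.
move=> /packedP ps cs; have := cs; rewrite ps => /andP [c_gt0 c_le].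
have /permP -> : perm_eq (undup s) (iota 1 (maxw s)).
  apply: uniq_perm; rewrite ?undup_uniq ?iota_uniq // => z.
  by rewrite mem_undup ps mem_iota; lia.
have -> : maxw s = c + (maxw s - c) by lia.
rewrite iotaD count_cat (@eq_in_count _ _ predT) => [|y]; last first.
  by rewrite mem_iota add1n ltnS => /andP [_ ->].
rewrite count_predT size_iota (@eq_in_count _ _ pred0) ?count_pred0 ?addn0 // => y.
by rewrite mem_iota add1n => /andP [c_lt _] /=; rewrite leqNgt c_lt.
Qed.

Lemma pack_id s : packed s -> pack s = s.
Proof.
move=> ps; rewrite /pack -[RHS]map_id; apply/eq_in_map => c cs.
exact: count_undup_packed.
Qed.

Definition splits_into (u v w : seq nat) : bool :=
  [&& size u <= size w, split_ok w (size u),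
      pack (take (size u) w) == u & pack (drop (size u) w) == v].

(** Since [pack] preserves lengths, only the cut at position |u| can contribute
    to the coefficient of F_w^* in F_u^* . F_v^*. *)
Lemma dual_prod_FdualE u v w : dual_prod (Fdual u) (Fdual v) w = splits_into u v w.
Proof.
rewrite /dual_prod /Fdual.
have other (i : 'I_(size w).+1) : (i : nat) != size u ->
    (if split_ok w i then (pack (take i w) == u) * (pack (drop i w) == v) else 0) = 0.
  move=> i_neq; case: (split_ok w i) => //.
  suff /negbTE -> : pack (take i w) != u by [].
  by apply: contra i_neq => /eqP <-; rewrite size_map size_takel // -ltnS.
case: (leqP (size u) (size w)) => [u_le | w_lt]; last first.
  rewrite /splits_into leqNgt w_lt big1 // => i _; apply: other.
  by rewrite neq_ltn (leq_trans (ltn_ord i)).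
have u_lt : size u < (size w).+1 by rewrite ltnS.
rewrite (bigD1 (Ordinal u_lt)) //= big1 => [|i i_neq].
  by rewrite addn0 /splits_into u_le; case: split_ok; case: eqP; case: eqP.
by apply: other; apply: contra i_neq => /eqP i_eq; apply/eqP/val_inj.
Qed.

(** An element w of the interval [u\v, u/v] splits into u and v: it has the
    length of u\v; restricted to either side of the cut, w is squeezed between
    two words of the relative order of u (resp. v); and since u\v has no letter
    common to both sides, neither has w. *)
Lemma interval_size u v w : inv_incl (gsp_under u v) w -> size w = size u + size v.
Proof. by case=> <- _; rewrite size_cat size_map. Qed.

Lemma interval_prefix u v w : packed u ->
  inv_incl (gsp_under u v) w -> inv_incl w (gsp_over u v) -> pack (take (size u) w) = u.
Proof.
move=> pu lo hi.
have := same_order_squeeze (inv_incl_take (size u) lo) (inv_incl_take (size u) hi).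
rewrite /gsp_under /gsp_over !take_size_cat ?size_map // => squeeze.
by rewrite (pack_same_order (squeeze (same_order_shift _ _))) pack_id.
Qed.

Lemma interval_suffix u v w : packed v ->
  inv_incl (gsp_under u v) w -> inv_incl w (gsp_over u v) -> pack (drop (size u) w) = v.
Proof.
move=> pv lo hi.
have := same_order_squeeze (inv_incl_drop (size u) lo) (inv_incl_drop (size u) hi).
rewrite /gsp_under /gsp_over !drop_size_cat ?size_map // => squeeze.
rewrite (pack_same_order (squeeze (same_order_sym (same_order_shift _ _)))).
by rewrite -(pack_same_order (same_order_shift v (maxw u))) pack_id.
Qed.

Lemma interval_split_ok u v w : packed v ->
  inv_incl (gsp_under u v) w -> split_ok w (size u).
Proof.
move=> pv lo; apply/hasPn => x /(nthP 0) [i].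
rewrite size_takel => [i_lt <- |]; last by rewrite (interval_size lo) leq_addr.
apply/negP => /(nthP 0) [j]; rewrite size_drop (interval_size lo) addKn => j_lt.
have ij : i < size u + j < size (gsp_under u v).
  by rewrite size_cat size_map (leq_trans i_lt (leq_addr _ _)) ltn_add2l.
have [_ lo_eq] := lo; have [same_eq _] := lo_eq _ _ ij.
rewrite nth_drop nth_take // => /eqP; rewrite eq_sym -same_eq.
rewrite /gsp_under !nth_cat i_lt ltnNge leq_addr addKn (nth_map 0) //= => /eqP.
have := leq_maxw (mem_nth 0 i_lt); have := packed_gt0 pv (mem_nth 0 j_lt).
by move: (nth 0 u i) (nth 0 v j) => ui vj; lia.
Qed.

Lemma interval_splits_into u v w : packed u -> packed v ->
  pw_le (gsp_under u v) w -> pw_le w (gsp_over u v) -> splits_into u v w.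
Proof.
move=> pu pv /inv_incl_pw_le lo /inv_incl_pw_le hi.
rewrite /splits_into (interval_size lo) leq_addr (interval_split_ok pv lo).
by rewrite (interval_prefix pu lo hi) (interval_suffix pv lo hi) !eqxx.
Qed.

Definition disj (s1 s2 : seq nat) : bool := ~~ has (fun x => x \in s2) s1.

Lemma disjP s1 s2 x : disj s1 s2 -> x \in s1 -> x \notin s2.
Proof. by move=> /hasPn H /H. Qed.

Lemma disj_sym s1 s2 : disj s1 s2 -> disj s2 s1.
Proof. by move=> d; apply/hasPn => x xs2; apply: contraL xs2; apply: disjP. Qed.

Lemma swap_letters_cat a s1 s2 :
  swap_letters a (s1 ++ s2) = swap_letters a s1 ++ swap_letters a s2.
Proof. exact: map_cat. Qed.

Lemma cover_split L H a : packed (L ++ H) -> disj L H -> a \in L -> a.+1 \in H ->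
  pw_cover (L ++ H) (swap_letters a (L ++ H)).
Proof.
move=> px dx aL a1H.
have a_gt0 : 0 < a by apply: (packed_gt0 px); rewrite mem_cat aL.
have a_lt : a < maxw (L ++ H) by apply: leq_maxw; rewrite mem_cat a1H orbT.
have a1L : a.+1 \notin L by apply: contraL a1H; apply: disjP.
split => //; first exact: packed_eq_mem px (fun z => esym (mem_swap_packed a_gt0 px a_lt z)).
exists a; split; first by rewrite swap_lettersK.
have := iInv_card_swap px a_gt0 a_lt.
have -> : follows (L ++ H) a a.+1 = 0.
  by rewrite /follows ltnNge (leq_trans (ltnW (first_pos_cat_in _ aL)) (last_pos_cat_out _ a1H)).
have -> : follows (L ++ H) a.+1 a = 1.
  by rewrite /follows (leq_trans (last_pos_cat_in aL (disjP dx aL)) (first_pos_cat_out _ a1L)).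
lia.
Qed.

Lemma swap_split L H a : packed (L ++ H) -> disj L H ->
  a \in L ++ H -> a.+1 \in L ++ H -> (a \in L) != (a.+1 \in L) ->
  [/\ packed (swap_letters a L ++ swap_letters a H),
      disj (swap_letters a L) (swap_letters a H),
      pack (swap_letters a L) = pack L & pack (swap_letters a H) = pack H].
Proof.
move=> px dx ax a1x sides.
have a_gt0 : 0 < a by apply: (packed_gt0 px).
have a_lt : a < maxw (L ++ H) by apply: leq_maxw.
split.
- rewrite -swap_letters_cat; apply: (packed_eq_mem px) => z.
  by rewrite mem_swap_packed.
- by apply/hasPn => z; rewrite !mem_swap_letters; apply: disjP.
- apply/esym/pack_same_order/same_order_swap.
  by move: sides; case: (a \in L); case: (a.+1 \in L).
apply/esym/pack_same_order/same_order_swap.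
case: (boolP (a.+1 \in L)) => a1L; first by rewrite (disjP dx a1L) orbT.
have aL : a \in L by move: sides; rewrite (negbTE a1L); case: (a \in L).
by rewrite (disjP dx aL).
Qed.

Lemma sumn_swap a s :
  sumn (swap_letters a s) + count_mem a.+1 s = sumn s + count_mem a s.
Proof. by elim: s => //= x s IH; rewrite /transp; repeat case: eqP; lia. Qed.

Lemma sumn_swap_lt a s : a \notin s -> a.+1 \in s -> sumn (swap_letters a s) < sumn s.
Proof.
move=> /count_memPn a_cnt a1s; have := sumn_swap a s; rewrite a_cnt addn0.
by have := a1s; rewrite -has_pred1 has_count; lia.
Qed.

(** If no letter a of H has its successor a+1 in L, then every letter of L is
    below every letter of H: otherwise climbing from a letter z of H towards a
    larger letter of L, one would cross from H to L between some a and a+1. *)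
Lemma split_low_high L H : packed (L ++ H) -> disj L H ->
  (forall a, a \in H -> a.+1 \notin L) -> forall y z, y \in L -> z \in H -> y < z.
Proof.
move=> /packedP px dx no_pair.
have above d z : z \in H -> z + d \notin L.
  elim: d z => [|d IH] z zH; first by rewrite addn0; apply: contraL zH; apply: disjP.
  apply/negP => zdL.
  have z_gt0 : 0 < z by move: (px z); rewrite mem_cat zH orbT => /esym /andP [].
  have : z + d \in L ++ H.
    by move: (px (z + d.+1)) (px (z + d)); rewrite mem_cat zdL /= => /esym /andP [_ ?] ->; lia.
  rewrite mem_cat => /orP [zdL' | zdH]; first by move: (IH z zH); rewrite zdL'.
  by move: (no_pair _ zdH); rewrite -addnS zdL.
move=> y z yL zH; rewrite ltnNge; apply/negP => z_le.
by move: (above (y - z) z zH); rewrite subnKC // yL.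
Qed.

Lemma count_undup_cat (P : pred nat) L H : disj L H ->
  count P (undup (L ++ H)) = count P (undup L) + count P (undup H).
Proof.
move=> dx; rewrite undup_cat count_cat (@eq_in_filter _ _ predT) ?filter_predT // => x.
by rewrite mem_undup => /(disjP dx).
Qed.

Section LowHigh.
Variables L H : seq nat.
Hypotheses (px : packed (L ++ H)) (dx : disj L H).
Hypothesis low_high : forall y z, y \in L -> z \in H -> y < z.

Lemma rank_low c : c \in L -> count (fun y => y <= c) (undup L) = c.
Proof.
move=> cL; have cx : c \in L ++ H by rewrite mem_cat cL.
rewrite -[RHS](count_undup_packed px cx) count_undup_cat //.
rewrite [X in _ + X](@eq_in_count _ _ pred0) ?count_pred0 ?addn0 // => z.
by rewrite mem_undup => zH /=; rewrite leqNgt low_high.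
Qed.

Lemma rank_high z : z \in H -> count (fun y => y <= z) (undup H) + size (undup L) = z.
Proof.
move=> zH; have zx : z \in L ++ H by rewrite mem_cat zH orbT.
rewrite -[RHS](count_undup_packed px zx) count_undup_cat // [RHS]addnC.
congr (_ + _); rewrite -count_predT; apply: eq_in_count => y.
by rewrite mem_undup => yL /=; rewrite ltnW ?low_high.
Qed.

Lemma maxw_low : maxw L = size (undup L).
Proof.
have [-> // | L_nil] := eqVneq L [::].
rewrite -[LHS](rank_low (maxw_in L_nil)) (@eq_in_count _ _ predT) ?count_predT // => y.
by rewrite mem_undup => /leq_maxw.
Qed.

Lemma pack_low : pack L = L.
Proof. by rewrite /pack -[RHS]map_id; apply/eq_in_map => c /rank_low. Qed.

Lemma pack_high : H = map (fun x => x + maxw L) (pack H).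
Proof.
rewrite /pack -map_comp maxw_low -[LHS]map_id; apply/eq_in_map => z zH /=.
by rewrite rank_high.
Qed.

End LowHigh.

Lemma packed_catC L H : packed (L ++ H) -> packed (H ++ L).
Proof. by move=> px; apply: (packed_eq_mem px) => z; rewrite !mem_cat orbC. Qed.

(** A word with a disjoint cut lies above u\v, where u and v pack its two
    sides: while some a of the right side has a+1 on the left, transposing
    them steps down a cover, keeps the packings and decreases the letter sum of
    the left side; when no such pair remains, the word is u\v. *)
Lemma split_above_under L H : packed (L ++ H) -> disj L H ->
  pw_le (gsp_under (pack L) (pack H)) (L ++ H).
Proof.
move sL: (sumn L) => s; elim/ltn_ind: s L H sL => s IH L H sL px dx.
have [/hasP [a aH a1L] | /hasPn no_pair] := boolP (has (fun a => a.+1 \in L) H); last first.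
  have low_high := split_low_high px dx no_pair.
  by rewrite /gsp_under (pack_low px dx low_high) -(pack_high px dx low_high); apply: rt_refl.
have aL : a \notin L by apply: contraL aH; apply: disjP.
have ax : a \in L ++ H by rewrite mem_cat aH orbT.
have a1x : a.+1 \in L ++ H by rewrite mem_cat a1L.
have sides : (a \in L) != (a.+1 \in L) by rewrite (negbTE aL) a1L.
have [px' dx' <- <-] := swap_split px dx ax a1x sides.
have a_L' : a \in swap_letters a L by rewrite mem_swap_letters transp_a.
have a1_H' : a.+1 \in swap_letters a H by rewrite mem_swap_letters transp_a1.
have := cover_split px' dx' a_L' a1_H'; rewrite -swap_letters_cat swap_lettersK => cover.
apply: rt_trans (rt_step _ _ _ _ cover); rewrite swap_letters_cat.
by apply: (IH (sumn (swap_letters a L))) px' dx' => //; rewrite -sL sumn_swap_lt.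
Qed.

(** Symmetrically, such a word lies below u/v: transposing an a on the left
    with an a+1 on the right steps up a cover, decreasing the letter sum of
    the right side. *)
Lemma split_below_over L H : packed (L ++ H) -> disj L H ->
  pw_le (L ++ H) (gsp_over (pack L) (pack H)).
Proof.
move sH: (sumn H) => s; elim/ltn_ind: s L H sH => s IH L H sH px dx.
have [/hasP [a aL a1H] | /hasPn no_pair] := boolP (has (fun a => a.+1 \in H) L); last first.
  have low_high := split_low_high (packed_catC px) (disj_sym dx) no_pair.
  rewrite /gsp_over (pack_low (packed_catC px) (disj_sym dx) low_high).
  by rewrite -(pack_high (packed_catC px) (disj_sym dx) low_high); apply: rt_refl.
have aH : a \notin H by apply: disjP aL.
have ax : a \in L ++ H by rewrite mem_cat aL.
have a1x : a.+1 \in L ++ H by rewrite mem_cat a1H orbT.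
have a1L : a.+1 \notin L by apply: contraL a1H; apply: disjP.
have sides : (a \in L) != (a.+1 \in L) by rewrite aL (negbTE a1L).
have [px' dx' <- <-] := swap_split px dx ax a1x sides.
have := cover_split px dx aL a1H; rewrite swap_letters_cat => cover.
apply: rt_trans (rt_step _ _ _ _ cover) _.
by apply: (IH (sumn (swap_letters a H))) px' dx' => //; rewrite -sH sumn_swap_lt.
Qed.

Definition ptree_nested_ind (P : ptree -> Prop) (P_leaf : P Leaf)
  (P_node : forall x cs, (forall c, List.In c cs -> P c) -> P (Node x cs)) :
  forall t, P t :=
  fix IH t := match t with
  | Leaf => P_leaf
  | Node x cs => P_node x cs
      ((fix all_IH (l : seq ptree) : forall c, List.In c l -> P c :=
          match l with
          | [::] => fun c (c_in : List.In c [::]) => False_ind _ c_in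
          | c0 :: l' => fun c c_in =>
              match c_in with
              | or_introl e => eq_ind c0 P (IH c0) c e
              | or_intror c_in' => all_IH l' c c_in'
              end
          end) cs)
  end.

Lemma all_In (p : pred ptree) cs c : all p cs -> List.In c cs -> p c.
Proof. by elim: cs => //= c0 cs IH /andP [p_c0 p_cs] [<- | /IH]; auto. Qed.

Lemma eq_has_In (p q : pred ptree) cs :
  (forall c, List.In c cs -> p c = q c) -> has p cs = has q cs.
Proof.
elim: cs => //= c cs IH pq; rewrite pq; last by left.
by rewrite IH // => d d_in; apply: pq; right.
Qed.

Lemma mem_flatten_map (f : ptree -> seq nat) cs z :
  (z \in flatten (map f cs)) = has (fun c => z \in f c) cs.
Proof. by elim: cs => //= c cs IH; rewrite mem_cat IH. Qed.

(** In a well-formed tree, the letters of the word are the node labels: each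
    internal node has at least two children, so its label occurs in its word. *)
Lemma mem_tree_word t : tree_wf t -> tree_word t =i tree_labels t.
Proof.
elim/ptree_nested_ind: t => [//|x cs IH] /= /and3P [cs_size _ cs_wf] z.
have IHz c : List.In c cs -> (z \in tree_word c) = (z \in tree_labels c).
  by move=> c_in; apply: IH c_in (all_In cs_wf c_in) z.
case: cs cs_size IHz {IH cs_wf} => [//|c [//|c1 cs']] _ IHz.
have c_in : List.In c [:: c, c1 & cs'] by left.
have c1_in : List.In c1 [:: c, c1 & cs'] by right; left.
rewrite in_cons mem_cat !mem_flatten_map /= !in_cons (IHz c c_in) (IHz c1 c1_in).
rewrite (@eq_has_In _ (fun d => (z == x) || (z \in tree_labels d))) => [|d d_in].
  by case: (z == x); rewrite /= ?orbT.
by rewrite in_cons IHz //; right; right.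
Qed.

Lemma gsp_packed w : isGSP w -> packed w.
Proof.
case=> t /and3P [t_wf t_lab /eqP <-].
apply: (@packed_of_range _ (size (tree_labels t))) => z.
by rewrite mem_tree_word // (perm_mem t_lab) mem_iota; lia.
Qed.

Lemma splits_into_interval u v w : packed w -> splits_into u v w ->
  pw_le (gsp_under u v) w /\ pw_le w (gsp_over u v).
Proof.
move=> pw /and4P [_ cut_ok /eqP pL /eqP pH].
have pLH : packed (take (size u) w ++ drop (size u) w) by rewrite cat_take_drop.
have := split_below_over pLH cut_ok; have := split_above_under pLH cut_ok.
by rewrite pL pH cat_take_drop.
Qed.

Unset Implicit Arguments.

Theorem mainTheorem10 :
  forall u v : seq nat, isGSP u -> isGSP v ->
  forall w : seq nat, isGSP w ->
    ((pw_le (gsp_under u v) w /\ pw_le w (gsp_over u v)) ->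
       dual_prod (Fdual u) (Fdual v) w = 1) /\
    (~ (pw_le (gsp_under u v) w /\ pw_le w (gsp_over u v)) ->
       dual_prod (Fdual u) (Fdual v) w = 0).
Proof.
move=> u v gu gv w gw; rewrite dual_prod_FdualE; split.
  by case=> lo hi; rewrite interval_splits_into // gsp_packed.
by case: (boolP (splits_into u v w)) => // /(splits_into_interval (gsp_packed gw)).
Qed.
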